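(* Let $G$ be a partial cube and let $f$ be a $\Theta$-graceful labeling of $G$. Let $C$ be an isometric $4$-cycle of $G$. Then for every two edges $xy$ and $uv$ of $C$ with $xy\,\Theta\,uv$, the following holds: $$d(x,u) < d(x,v) \ \Rightarrow\ f(x)+f(v) = f(y)+f(u),$$ where $d$ denotes the shortest-path distance in $G$.
   Context: A subgraph $H$ of a graph $G$ is isometric if $d_H(u,v)=d_G(u,v)$ for all vertices $u,v$ of $H$. A partial cube is a graph isomorphic to an isometric subgraph of some hypercube $Q_d$ (vertices: binary $d$-tuples, adjacent iff they differ in exactly one coordinate). The Djoković–Winkler relation $\Theta$ on the edges of $G$: edges $xy$ and $uv$ satisfy $xy\,\Theta\,uv$ iff $d(x,u)+d(y,v)\neq d(x,v)+d(y,u)$. On a partial cube $\Theta$ is an equivalence relation; its classes are called $\Theta$-classes. For a partial cube $G$ on $n$ vertices, a bijection $f:V(G)\to\{0,1,\ldots,n-1\}$ is a $\Theta$-graceful labeling if, labeling each edge $xy$ by $|f(x)-f(y)|$, all edges in the same $\Theta$-class receive the same label and distinct $\Theta$-classes receive distinct labels. *)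

(* Finite simple graphs as symmetric irreflexive relations. *)
From mathcomp Require Import all_boot.
Set Implicit Arguments.
Unset Strict Implicit.
Unset Printing Implicit Defensive.

Section Defs.
Variable T : finType.
Variable e : rel T.

(* In a connected graph such a walk exists with fewer than #|T| edges;
   if y is unreachable the value defaults to #|T| (never used below, since
   partial cubes are connected). *)
Definition dist (x y : T) : nat :=
  \big[minn/#|T|]_(n < #|T| | [exists p : n.-tuple T, path e x p && (last x p == y)]) n.

Definition hamming (d : nat) (a b : d.-tuple bool) : nat :=
  #|[set i : 'I_d | tnth a i != tnth b i]|.

Definition partial_cube : Prop :=
  (forall u v : T, connect e u v) /\
  exists (d : nat) (phi : T -> d.-tuple bool),
    forall u v : T, dist u v = hamming (phi u) (phi v).

Definition theta (x y u v : T) : Prop :=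
  e x y /\ e u v /\ dist x u + dist y v <> dist x v + dist y u.

Definition absdiff (a b : nat) : nat := maxn a b - minn a b.

Definition theta_graceful (f : T -> 'I_#|T|) : Prop :=
  bijective f /\
  forall x y u v : T, e x y -> e u v ->
    (theta x y u v <-> absdiff (f x) (f y) = absdiff (f u) (f v)).

Definition iso_4cycle (c0 c1 c2 c3 : T) : Prop :=
  uniq [:: c0; c1; c2; c3] /\
  e c0 c1 /\ e c1 c2 /\ e c2 c3 /\ e c3 c0 /\
  dist c0 c2 = 2 /\ dist c1 c3 = 2.

Definition cyc_edge (c0 c1 c2 c3 x y : T) : Prop :=
  (x, y) \in [:: (c0, c1); (c1, c0); (c1, c2); (c2, c1);
                 (c2, c3); (c3, c2); (c3, c0); (c0, c3)].
End Defs.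

(* Opposite edges of an isometric 4-cycle c0 c1 c2 c3 are Θ-related, so a
   Θ-graceful labeling gives |f c0 - f c1| = |f c3 - f c2| and
   |f c0 - f c3| = |f c1 - f c2|; as f c0 <> f c2, this forces
   f c0 + f c2 = f c1 + f c3.  Two Θ-related cycle edges xy, uv with
   d(x,u) < d(x,v) are either the same oriented edge or opposite edges with
   x, y, v, u in cyclic order, and in both cases the claim follows. *)
From mathcomp Require Import all_boot zify.
Set Implicit Arguments.
Unset Strict Implicit.
Unset Printing Implicit Defensive.

Lemma bigmin_le (I : eqType) (r : seq I) (P : pred I) (F : I -> nat) x0 i :
  i \in r -> P i -> \big[minn/x0]_(j <- r | P j) F j <= F i.
Proof.
elim: r => // a r IHr; rewrite inE big_cons => /orP[/eqP<- -> | ri Pi].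
  exact: geq_minl.
by case: (P a); rewrite ?geq_min IHr ?orbT.
Qed.

Lemma absdiff_parallelogram a b c d :
  absdiff a b = absdiff d c -> absdiff a d = absdiff b c -> a != c ->
  a + c = b + d.
Proof. by rewrite /absdiff => ? ? /eqP; lia. Qed.

Section Distance.
Variables (T : finType) (e : rel T).

Lemma dist_le x y n (p : n.-tuple T) :
  n < #|T| -> path e x p -> last x p = y -> dist e x y <= n.
Proof.
move=> ltnT ep lastp; apply: (@bigmin_le _ _ _ _ _ (Ordinal ltnT)).
  exact: mem_index_enum.
by apply/existsP; exists p; rewrite ep lastp eqxx.
Qed.

Lemma dist_xx x : dist e x x = 0.
Proof.
by apply/eqP; rewrite -leqn0 (@dist_le _ _ 0 [tuple]) //; apply/card_gt0P; exists x.
Qed.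

Lemma dist_gt0 x y : x != y -> 0 < dist e x y.
Proof.
move=> neq_xy; apply: (big_ind (fun m => 0 < m)).
- by apply/card_gt0P; exists x.
- by move=> m n m_gt0 n_gt0; rewrite leq_min m_gt0 n_gt0.
move=> [[|n] ?] //= /existsP[p /andP[_ /eqP lastp]].
by rewrite (tuple0 p) /= in lastp; rewrite lastp eqxx in neq_xy.
Qed.

Lemma dist_edge x y : irreflexive e -> e x y -> dist e x y = 1.
Proof.
move=> eirr exy; have neq_xy : x != y by apply: contraTneq exy => ->; rewrite eirr.
apply/eqP; rewrite eqn_leq dist_gt0 // andbT (@dist_le _ _ 1 [tuple y]) //=.
- by rewrite (cardD1 x) (cardD1 y) !inE eq_sym neq_xy.
- by rewrite exy.
Qed.

Lemma partial_cube_dist_sym x y : partial_cube e -> dist e x y = dist e y x.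
Proof.
case=> _ [d [phi dist_phi]]; rewrite !dist_phi /hamming.
by apply: eq_card => i; rewrite !inE eq_sym.
Qed.

End Distance.

Section IsometricFourCycle.
Variables (T : finType) (e : rel T).
Hypotheses (esym : symmetric e) (eirr : irreflexive e) (Hpc : partial_cube e).
Variables c0 c1 c2 c3 : T.
Hypothesis HC : iso_4cycle e c0 c1 c2 c3.

Lemma iso_4cycle_theta_opposite :
  theta e c0 c1 c3 c2 /\ theta e c0 c3 c1 c2.
Proof.
case: HC => _ [e01 [e12 [e23 [e30 [d02 d13]]]]].
have d_sym := partial_cube_dist_sym _ _ Hpc.
have d_edge := dist_edge eirr.
rewrite /theta (esym c3) (esym c0 c3) e01 e12 e23 e30 d02 d13.
by rewrite (d_sym c3 c1) d13 (d_sym c3 c2) !d_edge // esym.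
Qed.

Lemma theta_graceful_iso_4cycle_sum (f : T -> 'I_#|T|) :
  theta_graceful e f -> f c0 + f c2 = f c1 + f c3.
Proof.
case=> [[? fK _] graceful]; case: HC => _ [e01 [e12 [e23 [e30 [d02 _]]]]].
have [th01_32 th03_12] := iso_4cycle_theta_opposite.
have [e32 e03] : e c3 c2 /\ e c0 c3 by split; rewrite esym.
apply: absdiff_parallelogram.
- exact/(graceful _ _ _ _ e01 e32).
- exact/(graceful _ _ _ _ e03 e12).
apply: contra_eqN d02 => /eqP/val_inj/(can_inj fK) <-.
by rewrite dist_xx.
Qed.

Lemma theta_cycle_edges_sum (F : T -> nat) x y u v :
  F c0 + F c2 = F c1 + F c3 ->
  cyc_edge c0 c1 c2 c3 x y -> cyc_edge c0 c1 c2 c3 u v ->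
  theta e x y u v -> dist e x u < dist e x v ->
  F x + F v = F y + F u.
Proof.
case: HC => _ [e01 [e12 [e23 [e30 [d02 d13]]]]] Fsum.
have d_sym := partial_cube_dist_sym _ _ Hpc.
have [d01 d12 d23 d30] :
    [/\ dist e c0 c1 = 1, dist e c1 c2 = 1, dist e c2 c3 = 1 & dist e c3 c0 = 1].
  by split; apply: dist_edge.
have [d10 d21 d32 d03] :
    [/\ dist e c1 c0 = 1, dist e c2 c1 = 1, dist e c3 c2 = 1 & dist e c0 c3 = 1].
  by split; rewrite d_sym.
have [d20 d31] : dist e c2 c0 = 2 /\ dist e c3 c1 = 2 by split; rewrite d_sym.
rewrite /cyc_edge !inE !xpair_eqE => xy_in uv_in [_ [_]].
do ![case/orP: xy_in => [/andP[/eqP-> /eqP->] | xy_in] | move/andP: xy_in => [/eqP-> /eqP->]];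
do ![case/orP: uv_in => [/andP[/eqP-> /eqP->] | uv_in] | move/andP: uv_in => [/eqP-> /eqP->]];
  rewrite ?dist_xx ?d01 ?d12 ?d23 ?d30 ?d10 ?d21 ?d32 ?d03 ?d02 ?d13 ?d20 ?d31;
  lia.
Qed.

End IsometricFourCycle.

Theorem lemma1 (T : finType) (e : rel T)
  (esym : symmetric e) (eirr : irreflexive e)
  (Hpc : partial_cube e)
  (f : T -> 'I_#|T|) (Hf : theta_graceful e f)
  (c0 c1 c2 c3 : T) (HC : iso_4cycle e c0 c1 c2 c3)
  (x y u v : T) :
  cyc_edge c0 c1 c2 c3 x y -> cyc_edge c0 c1 c2 c3 u v ->
  theta e x y u v ->
  dist e x u < dist e x v ->
  f x + f v = f y + f u.
Proof.
apply: (theta_cycle_edges_sum eirr Hpc HC (F := fun t => f t)).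
exact: (theta_graceful_iso_4cycle_sum esym eirr Hpc HC).
Qed.
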